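(* If $N$ is odd and divisible by $3$, then $\rho(2/3,N)=2/9$.
   Context: For an integer $N\ge 2$ and $f:\mathbb{Z}_N\to\mathbb{C}$, define $\mathbb{E}(f)=\frac1N\sum_{n\in\mathbb{Z}_N} f(n)$ and $\Lambda_3(f)=\frac{1}{N^2}\sum_{n,d\in\mathbb{Z}_N} f(n)f(n+d)f(n+2d)$. For $\upsilon\in(0,1]$, $\rho(\upsilon,N)=\min\{\Lambda_3(f): f:\mathbb{Z}_N\to[0,1],\ \mathbb{E}(f)\ge\upsilon\}$. *)

From HB Require Import structures.
From mathcomp Require Import all_boot all_order all_algebra.
From mathcomp Require Import reals.
Set Implicit Arguments. Unset Strict Implicit. Unset Printing Implicit Defensive.
Import Order.TTheory GRing.Theory Num.Theory.
Local Open Scope ring_scope.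

(* Functions f : Z_N -> R, with 'Z_N the ring of integers mod N (used for N >= 2). *)

Definition EE (R : realType) (N : nat) (f : 'Z_N -> R) : R :=
  N%:R^-1 * \sum_(n : 'Z_N) f n.

Definition Lambda3 (R : realType) (N : nat) (f : 'Z_N -> R) : R :=
  (N%:R ^+ 2)^-1 *
    \sum_(n : 'Z_N) \sum_(d : 'Z_N) f n * f (n + d) * f (n + d *+ 2).

Definition admissible (R : realType) (N : nat) (v : R) (f : 'Z_N -> R) : Prop :=
  (forall n, 0 <= f n <= 1) /\ v <= EE f.

(* r = rho(v, N) = min { Lambda3 f : f admissible } : the minimum is attained
   and equals r. *)
Definition is_rho (R : realType) (v : R) (N : nat) (r : R) : Prop :=
  (exists f : 'Z_N -> R, admissible v f /\ Lambda3 f = r) /\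
  (forall f : 'Z_N -> R, admissible v f -> r <= Lambda3 f).

From HB Require Import structures.
From mathcomp Require Import all_boot all_order all_algebra.
From mathcomp Require Import reals ring lra.
Set Implicit Arguments. Unset Strict Implicit. Unset Printing Implicit Defensive.
Import Order.TTheory GRing.Theory Num.Theory.
Local Open Scope ring_scope.

(* For [x, y, z] in [0, 1] we have [3xyz >= 2(xy + yz + xz) - (x + y + z)].
   Apply it to [f n, f (n + d), f (n + 2d)] and sum over all [n, d].  As [N] is
   odd, [2] is a unit of [Z_N], so each of [(n, d) |-> (n, n + d)],
   [(n + d, n + 2d)] and [(n, n + 2d)] is a bijection of [Z_N^2]: every pair sum
   equals [S^2] and every single sum equals [N S], where [S] is the sum of [f].
   Hence [Lambda3 f >= 2 E(f)^2 - E(f) >= 2/9] once [E(f) >= 2/3].  Since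
   [3 | N], residues mod 3 are well defined on [Z_N], and the indicator of the
   nonzero residues has mean [2/3]; the progression [n, n + d, n + 2d] lies in
   its support iff [n <> 0] and [d = 0] mod 3, so its [Lambda3] is
   [2/3 * 1/3]. *)

Lemma three_term_ineq (R : numDomainType) (x y z : R) :
  0 <= x <= 1 -> 0 <= y <= 1 -> 0 <= z <= 1 ->
  2 * (x * y + y * z + x * z) - (x + y + z) <= 3 * (x * y * z).
Proof.
move=> /andP[x0 x1] /andP[y0 y1] /andP[z0 z1]; rewrite -subr_ge0.
have -> : 3 * (x * y * z) - (2 * (x * y + y * z + x * z) - (x + y + z)) =
  x * (1 - y) * (1 - z) + y * (1 - x) * (1 - z) + z * (1 - x) * (1 - y) by ring.
by rewrite !addr_ge0 // !mulr_ge0 // subr_ge0.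
Qed.

Section AffineSums.
Variables (R : pzSemiRingType) (N : nat).
Implicit Types (F G : 'Z_N -> R).

Lemma sum_shift F (c : 'Z_N) : \sum_n F (n + c) = \sum_n F n.
Proof. by rewrite [RHS](reindex_inj (addIr c)). Qed.

Lemma sum_affine F (a : 'Z_N) :
  \sum_n \sum_d F (n + d * a) = (\sum_n F n) *+ #|'Z_N|.
Proof.
rewrite exchange_big /= -sumr_const.
by apply: eq_bigr => d _; rewrite sum_shift.
Qed.

Lemma sum_affine_pair F G (a b : 'Z_N) : b - a \is a GRing.unit ->
  \sum_n \sum_d F (n + d * a) * G (n + d * b) = (\sum_n F n) * (\sum_n G n).
Proof.
move=> ba_unit.
pose h (p : 'Z_N * 'Z_N) := (p.1 + p.2 * a, p.1 + p.2 * b).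
have h_inj : injective h.
  move=> [n d] [n' d'] /eqP; rewrite xpair_eqE => /andP[/eqP /= ea /eqP /= eb].
  have edd : d * (b - a) = d' * (b - a).
    have diff m e : e * (b - a) = (m + e * b) - (m + e * a) by ring.
    by rewrite (diff n) (diff n') ea eb.
  by move: ea; rewrite (mulIr ba_unit edd) => /addIr ->.
by rewrite big_distrlr !pair_big [RHS](reindex_inj h_inj).
Qed.

End AffineSums.

Section LowerBound.
Variables (R : realType) (N : nat).
Hypotheses (N_gt1 : (1 < N)%N) (N_odd : odd N).

Lemma card_Zp_gt1 : #|'Z_N| = N.
Proof. by rewrite card_ord Zp_cast. Qed.

Lemma Zp_two_unit : (2%:R : 'Z_N) \is a GRing.unit.
Proof. by rewrite unitZpE // coprimen2. Qed.

Lemma sum_ap3_ge (f : 'Z_N -> R) : (forall n, 0 <= f n <= 1) ->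
  2 * (\sum_n f n) ^+ 2 - N%:R * \sum_n f n <=
  \sum_n \sum_d f n * f (n + d) * f (n + d *+ 2).
Proof.
move=> f01; set S := \sum_n f n.
have affine_form n d : [/\ f n = f (n + d * 0), f (n + d) = f (n + d * 1)
                    & f (n + d *+ 2) = f (n + d * 2%:R)].
  by rewrite mulr0 addr0 mulr1 mulr_natr.
have pair a b : b - a \is a GRing.unit ->
    \sum_n \sum_d f (n + d * a) * f (n + d * b) = S ^+ 2.
  by move=> ba; rewrite sum_affine_pair.
have lin a : \sum_n \sum_d f (n + d * a) = N%:R * S.
  by rewrite sum_affine card_Zp_gt1 mulr_natl.
have summed : \sum_n \sum_d (2 * (f n * f (n + d) + f (n + d) * f (n + d *+ 2)
      + f n * f (n + d *+ 2)) - (f n + f (n + d) + f (n + d *+ 2)))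
    = 3 * (2 * S ^+ 2 - N%:R * S).
  under eq_bigr => n _ do under eq_bigr => d _ do
    case: (affine_form n d) => -> -> ->.
  under eq_bigr => n _ do rewrite sumrB -mulr_sumr !big_split.
  rewrite sumrB -mulr_sumr !big_split /= !pair ?lin //.
  - ring.
  - by rewrite subr0 Zp_two_unit.
  - by rewrite -[2%:R]/(1 + 1) addrK unitr1.
  - by rewrite subr0 unitr1.
rewrite -(@ler_pM2l _ 3) // -summed mulr_sumr.
apply: ler_sum => n _; rewrite mulr_sumr; apply: ler_sum => d _.
exact: three_term_ineq.
Qed.

Lemma Lambda3_ge (f : 'Z_N -> R) : (forall n, 0 <= f n <= 1) ->
  2 * EE f ^+ 2 - EE f <= Lambda3 f.
Proof.
move=> f01; have N_neq0 : (N%:R : R) != 0 by rewrite pnatr_eq0 -lt0n ltnW.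
have -> : 2 * EE f ^+ 2 - EE f =
    (N%:R ^+ 2)^-1 * (2 * (\sum_n f n) ^+ 2 - N%:R * \sum_n f n).
  by rewrite /EE; field.
by rewrite ler_wpM2l ?invr_ge0 ?exprn_ge0 ?sum_ap3_ge.
Qed.

End LowerBound.

Lemma sum_nat_modn (V : nmodType) (G : nat -> V) (m k : nat) :
  \sum_(0 <= i < m * k) G (i %% m)%N = (\sum_(j < m) G j) *+ k.
Proof.
elim: k => [|k IHk]; first by rewrite muln0 big_geq.
rewrite mulnS addnC (big_cat_nat _ (leq_addr _ _)) //= IHk mulrS addrC.
congr (_ + _); rewrite -{1}[(m * k)%N]add0n big_addn addKn big_mkord.
by apply: eq_bigr => i _; rewrite -modnDmr modnMr addn0 modn_small.
Qed.

Lemma ap3_nonzero_mod3 (n d : nat) :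
  [&& n %% 3 != 0, (n + d) %% 3 != 0 & (n + d + d) %% 3 != 0]%N =
  (n %% 3 != 0)%N && (d %% 3 == 0)%N.
Proof.
rewrite -addnA -(modnDm n) -(modnDm n (d + d)) -(modnDm d d).
have := ltn_pmod n (isT : 0 < 3)%N; have := ltn_pmod d (isT : 0 < 3)%N.
move: (n %% 3)%N (d %% 3)%N => b a.
by case: a => [|[|[|]]] //; case: b => [|[|[|]]].
Qed.

Section Extremal.
Variables (R : realType) (N : nat).
Hypotheses (N_gt1 : (1 < N)%N) (N_3 : (3 %| N)%N).

Lemma sum_Zp_modn {V : nmodType} (G : nat -> V) (m : nat) : (m %| N)%N ->
  \sum_(x : 'Z_N) G (x %% m)%N = (\sum_(j < m) G j) *+ (N %/ m).
Proof.
move=> mN; have -> : \sum_(x : 'Z_N) G (x %% m)%N = \sum_(0 <= i < N) G (i %% m)%N.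
  by rewrite -[in RHS](Zp_cast N_gt1) big_mkord.
by rewrite -{1}(divnK mN) mulnC sum_nat_modn.
Qed.

Lemma Zp_add_modn (m : nat) (x y : 'Z_N) : (m %| N)%N ->
  ((x + y)%R %% m = (x + y) %% m)%N.
Proof. by move=> mN; rewrite /= modn_dvdm // Zp_cast. Qed.

Definition nonzero_mod3 (x : 'Z_N) : R := ((x %% 3)%N != 0)%:R.

Lemma nonzero_mod3_ap3 (n d : 'Z_N) :
  nonzero_mod3 n * nonzero_mod3 (n + d) * nonzero_mod3 (n + d *+ 2) =
  nonzero_mod3 n * ((d %% 3)%N == 0)%:R.
Proof.
rewrite /nonzero_mod3 mulr2n addrA !Zp_add_modn //.
rewrite -(modnDml (n + d)%R) Zp_add_modn // modnDml.
by rewrite -!natrM !mulnb -andbA ap3_nonzero_mod3.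
Qed.

Let k_neq0 : ((N %/ 3)%N%:R : R) != 0.
Proof. by rewrite pnatr_eq0 -lt0n divn_gt0 // dvdn_leq // ltnW. Qed.

Let N_eq : (N%:R : R) = 3 * (N %/ 3)%N%:R.
Proof. by rewrite -natrM mulnC divnK. Qed.

Let sum_nonzero_mod3 : \sum_x nonzero_mod3 x = 2 * (N %/ 3)%N%:R.
Proof.
rewrite (sum_Zp_modn (fun j => (j != 0)%:R)) //.
by rewrite !big_ord_recr big_ord0 /= -mulr_natl; ring.
Qed.

Lemma EE_nonzero_mod3 : EE nonzero_mod3 = 2%:R / 3%:R.
Proof. by rewrite /EE sum_nonzero_mod3 N_eq; field. Qed.

Lemma Lambda3_nonzero_mod3 : Lambda3 nonzero_mod3 = 2%:R / 9%:R.
Proof.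
rewrite /Lambda3; under eq_bigr => n _ do under eq_bigr => d _ do
  rewrite nonzero_mod3_ap3.
rewrite -big_distrlr sum_nonzero_mod3 (sum_Zp_modn (fun j => (j == 0)%:R)) //.
rewrite N_eq -mulr_natl; have := k_neq0; set k := _%:R => k0.
by rewrite !big_ord_recr big_ord0 /=; field.
Qed.

End Extremal.

Lemma two_ninths_le_quadratic (R : realFieldType) (e : R) :
  2%:R / 3%:R <= e -> 2%:R / 9%:R <= 2 * e ^+ 2 - e.
Proof. by move=> e_ge; nra. Qed.

Theorem mainTheorem10 (R : realType) (N : nat) :
  (2 <= N)%N -> odd N -> (3 %| N)%N ->
  is_rho (2%:R / 3%:R : R) N (2%:R / 9%:R).
Proof.
move=> N_gt1 N_odd N_3; split.
  exists (@nonzero_mod3 R N); split; last exact: Lambda3_nonzero_mod3.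
  split; last by rewrite EE_nonzero_mod3.
  by move=> n; rewrite /nonzero_mod3 ler0n lern1 leq_b1.
move=> f [f01 f_mean].
apply: le_trans (Lambda3_ge N_gt1 N_odd f01); last first.
exact: two_ninths_le_quadratic.
Qed.
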